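(* Let $A\in\mathcal{V}$ and let $\theta,\chi\in Con(A)$ with $\theta\vee\chi\neq\nabla_A$. If $\theta$ has $CBLP$ and $|B(Con(A/\chi))|\leq 2$, then $\theta\cap\chi$ has $CBLP$.
   Context: $\mathcal{V}$ is a congruence modular, semidegenerate variety (no nontrivial algebra has a one-element subalgebra) of finite signature. For $B\in\mathcal{V}$: $Con(B)$ is its congruence lattice with bounds $\Delta_B,\nabla_B$, $[\cdot,\cdot]$ the Freese–McKenzie commutator, $K(B)$ the compact congruences. A congruence $\phi\neq\nabla_B$ is prime if $[\alpha,\beta]\subseteq\phi$ implies $\alpha\subseteq\phi$ or $\beta\subseteq\phi$; $\rho(\theta)$ is the intersection of primes containing $\theta$. $B(Con(B))$ is the Boolean algebra of complemented elements of $Con(B)$. When $K(B)$ is closed under the commutator, the reticulation $L(B)=K(B)/{\equiv}$ ($\alpha\equiv\beta$ iff $\rho(\alpha)=\rho(\beta)$) is a bounded distributive lattice with canonical map $\lambda_B$, mapping $B(Con(B))$ injectively into $B(L(B))$; the reticulation preserves the Boolean center if this map is onto $B(L(B))$. Standing assumption: for every $B\in\mathcal{V}$, $K(B)$ is closed under the commutator and the reticulation of $B$ preserves the Boolean center. A congruence $\theta$ of $A$ has $CBLP$ if for every $\beta\in B(Con(A/\theta))$ there is $\alpha\in B(Con(A))$ with $(\alpha\vee\theta)/\theta=\beta$. *)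

From mathcomp Require Import ssreflect ssrfun ssrbool eqtype ssrnat seq fintype.
From Stdlib Require Import ClassicalEpsilon List.

Set Implicit Arguments.
Unset Strict Implicit.
Unset Printing Implicit Defensive.

Record signature := Signature { sym : finType; arity : sym -> nat }.

Record algebra (sg : signature) := Algebra {
  carrier :> Type;
  ops : forall f : sym sg, ('I_(arity f) -> carrier) -> carrier }.

Inductive term (sg : signature) : Type :=
| Var : nat -> term sg
| App : forall f : sym sg, ('I_(arity f) -> term sg) -> term sg.

Fixpoint eval (sg : signature) (A : algebra sg) (e : nat -> A) (t : term sg) : A :=
  match t with
  | Var n => e n
  | App f ts => @ops sg A f (fun i => eval e (ts i))
  end.

(* A variety = the class of models of a set of identities (Birkhoff). *)
Definition in_variety (sg : signature) (Sigma : term sg -> term sg -> Prop)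
  (A : algebra sg) : Prop :=
  forall s t, Sigma s t -> forall e : nat -> A, eval e s = eval e t.

Definition crel (T : Type) := T -> T -> Prop.

Definition cle (T : Type) (r s : crel T) := forall x y, r x y -> s x y.
Definition ceq (T : Type) (r s : crel T) := cle r s /\ cle s r.

Definition is_cong (sg : signature) (A : algebra sg) (r : crel A) : Prop :=
  (forall x, r x x) /\ (forall x y, r x y -> r y x) /\
  (forall x y z, r x y -> r y z -> r x z) /\
  (forall (f : sym sg) (a b : 'I_(arity f) -> A),
      (forall i, r (a i) (b i)) -> r (@ops sg A f a) (@ops sg A f b)).

Definition Delta (T : Type) : crel T := fun x y => x = y.
Definition Nabla (T : Type) : crel T := fun _ _ => True.

Definition cmeet (T : Type) (r s : crel T) : crel T := fun x y => r x y /\ s x y.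

Definition cjoin (sg : signature) (A : algebra sg) (r s : crel A) : crel A :=
  fun x y => forall c, is_cong c -> cle r c -> cle s c -> c x y.

Definition cbigjoin (sg : signature) (A : algebra sg) (S : crel A -> Prop) : crel A :=
  fun x y => forall c, is_cong c -> (forall r, S r -> cle r c) -> c x y.

Definition clistjoin (sg : signature) (A : algebra sg) (l : list (crel A)) : crel A :=
  cbigjoin (fun r => In r l).

Definition compact (sg : signature) (A : algebra sg) (a : crel A) : Prop :=
  is_cong a /\
  forall S : crel A -> Prop, (forall r, S r -> is_cong r) ->
    cle a (cbigjoin S) ->
    exists l : list (crel A), (forall r, In r l -> S r) /\ cle a (clistjoin l).

(* Term condition C(alpha, beta; delta): for every term t(xs, ys),
   xs-tuples a alpha b, ys-tuples c beta d,
   t(a,c) delta t(a,d) implies t(b,c) delta t(b,d).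
   The variables are split into the x-group and y-group by P. *)
Definition mix (T : Type) (P : nat -> bool) (u v : nat -> T) : nat -> T :=
  fun i => if P i then u i else v i.

Definition TC (sg : signature) (A : algebra sg) (alpha beta delta : crel A) : Prop :=
  forall (t : term sg) (P : nat -> bool) (a b c d : nat -> A),
    (forall i, alpha (a i) (b i)) -> (forall i, beta (c i) (d i)) ->
    delta (eval (mix P a c) t) (eval (mix P a d) t) ->
    delta (eval (mix P b c) t) (eval (mix P b d) t).

Definition comm (sg : signature) (A : algebra sg) (alpha beta : crel A) : crel A :=
  fun x y => forall delta, is_cong delta -> TC alpha beta delta -> delta x y.

Definition prime_cong (sg : signature) (A : algebra sg) (phi : crel A) : Prop :=
  is_cong phi /\ ~ cle (@Nabla A) phi /\
  forall alpha beta, is_cong alpha -> is_cong beta ->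
    cle (comm alpha beta) phi -> cle alpha phi \/ cle beta phi.

Definition rho (sg : signature) (A : algebra sg) (theta : crel A) : crel A :=
  fun x y => forall phi, prime_cong phi -> cle theta phi -> phi x y.

Definition complemented (sg : signature) (A : algebra sg) (a : crel A) : Prop :=
  is_cong a /\ exists b, is_cong b /\
    ceq (cmeet a b) (@Delta A) /\ ceq (cjoin a b) (@Nabla A).

(* Reticulation L(A) = K(A)/~ with kappa ~ kappa' iff rho kappa = rho kappa';
   lambda_A(kappa) = class of kappa; its lattice operations are
   lambda(a) /\ lambda(b) = lambda([a,b]), lambda(a) \/ lambda(b) = lambda(a \/ b),
   0 = lambda(Delta), 1 = lambda(Nabla).
   ret_complemented kappa : lambda_A(kappa) belongs to B(L(A)). *)
Definition ret_complemented (sg : signature) (A : algebra sg) (k : crel A) : Prop :=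
  compact k /\ exists k', compact k' /\
    ceq (rho (comm k k')) (rho (@Delta A)) /\
    ceq (rho (cjoin k k')) (rho (@Nabla A)).

(* the reticulation preserves the Boolean center:
   lambda_A restricted to B(Con(A)) is onto B(L(A)) *)
Definition ret_preserves_boolean_center (sg : signature) (A : algebra sg) : Prop :=
  forall k : crel A, ret_complemented k ->
    exists a, complemented a /\ compact a /\ ceq (rho a) (rho k).

Definition compacts_closed_under_comm (sg : signature) (A : algebra sg) : Prop :=
  forall a b : crel A, compact a -> compact b -> compact (comm a b).

Definition congruence_modular (sg : signature) (Sigma : term sg -> term sg -> Prop) :=
  forall B : algebra sg, in_variety Sigma B ->
    forall a b c : crel B, is_cong a -> is_cong b -> is_cong c -> cle a c ->
      ceq (cmeet (cjoin a b) c) (cjoin a (cmeet b c)).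

(* no nontrivial algebra of the variety has a one-element subalgebra *)
Definition semidegenerate (sg : signature) (Sigma : term sg -> term sg -> Prop) :=
  forall B : algebra sg, in_variety Sigma B ->
    forall b : B,
      (forall (f : sym sg) (args : 'I_(arity f) -> B),
          (forall i, args i = b) -> @ops sg B f args = b) ->
      forall x y : B, x = y.

Definition standing_assumption (sg : signature) (Sigma : term sg -> term sg -> Prop) :=
  forall B : algebra sg, in_variety Sigma B ->
    compacts_closed_under_comm B /\ ret_preserves_boolean_center B.

(* Quotient algebra A/theta: carrier = classes of theta; operations act on
   chosen representatives (well defined when theta is a congruence). *)
Definition class (T : Type) (theta : crel T) (a : T) : T -> Prop := theta a.

Definition quot_carrier (sg : signature) (A : algebra sg) (theta : crel A) :=
  { X : A -> Prop | exists a, X = class theta a }.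

Definition repr (sg : signature) (A : algebra sg) (theta : crel A)
  (X : quot_carrier theta) : A :=
  proj1_sig (constructive_indefinite_description _ (proj2_sig X)).

Definition cls (sg : signature) (A : algebra sg) (theta : crel A) (a : A) :
  quot_carrier theta := exist _ (class theta a) (ex_intro _ a erefl).

Definition quot (sg : signature) (A : algebra sg) (theta : crel A) : algebra sg :=
  @Algebra sg (quot_carrier theta)
    (fun f xs => cls theta (@ops sg A f (fun i => repr (xs i)))).

(* theta has CBLP: every beta in B(Con(A/theta)) equals (alpha \/ theta)/theta
   for some alpha in B(Con(A)); (alpha \/ theta)/theta relates the classes of
   x and y iff x (alpha \/ theta) y. *)
Definition CBLP (sg : signature) (A : algebra sg) (theta : crel A) : Prop :=
  forall beta : crel (quot theta), complemented beta ->
    exists alpha : crel A, complemented alpha /\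
      forall X Y : quot theta, beta X Y <-> cjoin alpha theta (repr X) (repr Y).

(* |B(Con(B))| <= 2 (congruences identified up to extensional equality) *)
Definition boolean_center_le2 (sg : signature) (B : algebra sg) : Prop :=
  forall b1 b2 b3 : crel B, complemented b1 -> complemented b2 -> complemented b3 ->
    ceq b1 b2 \/ ceq b1 b3 \/ ceq b2 b3.

From mathcomp Require Import ssreflect ssrfun ssrbool eqtype ssrnat fintype bigop.
From Stdlib Require Import Relations FunctionalExtensionality PropExtensionality.
From Stdlib Require Import ProofIrrelevance ClassicalEpsilon.

Set Implicit Arguments.
Unset Strict Implicit.
Unset Printing Implicit Defensive.

(* Pull a complemented congruence of A/(θ∧χ) back to congruences β, γ ⊇ θ∧χ of A with
   β∨γ = ∇ and β∧γ = θ∧χ.  In a semidegenerate variety [∇, χ] = Δ forces χ = Δ; together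
   with modularity this makes comaximal pairs behave distributively:
   (β∨κ)∧(γ∨κ) ⊆ κ whenever β∧γ ⊆ κ.  Hence (β∨χ)/χ is complemented in A/χ, and as
   B(Con(A/χ)) = {Δ, ∇} and θ∨χ ≠ ∇, one of β, γ lies below χ, say β.  Then (β∨θ)/θ is
   complemented, the CBLP of θ gives a complemented α with α∨θ = β∨θ, the same dichotomy
   puts α below χ, and modularity yields β = α∨(θ∧χ); in the other case the complement of
   α does the job for β. *)

Section CongruenceLattice.
Variables (sg : signature) (A : algebra sg).
Implicit Types r s c : crel A.

Lemma cong_refl c : is_cong c -> forall x, c x x.
Proof. by case. Qed.

Lemma cong_sym c : is_cong c -> forall x y, c x y -> c y x.
Proof. by case=> _ []. Qed.

Lemma cong_trans c : is_cong c -> forall x y z, c x y -> c y z -> c x z.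
Proof. by case=> _ [] _ []. Qed.

Lemma cong_ops c : is_cong c -> forall (f : sym sg) (a b : 'I_(arity f) -> A),
  (forall i, c (a i) (b i)) -> c (ops a) (ops b).
Proof. by case=> _ [] _ []. Qed.

Lemma cle_trans r s c : cle r s -> cle s c -> cle r c.
Proof. by move=> Hrs Hsc x y /Hrs /Hsc. Qed.

Lemma cjoin_cong r s : is_cong (cjoin r s).
Proof.
split; [|split; [|split]].
- by move=> x c [Hc _].
- by move=> x y H c Hc Hr Hs; apply: (cong_sym Hc); apply: H.
- by move=> x y z H1 H2 c Hc Hr Hs; apply: (cong_trans Hc (y := y)); [apply: H1|apply: H2].
- by move=> f a b H c Hc Hr Hs; apply: (cong_ops Hc) => i; apply: H.
Qed.

Lemma cjoinl r s : cle r (cjoin r s).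
Proof. by move=> x y H c _ Hr _; apply: Hr. Qed.

Lemma cjoinr r s : cle s (cjoin r s).
Proof. by move=> x y H c _ _ Hs; apply: Hs. Qed.

Lemma cjoin_least r s c : is_cong c -> cle r c -> cle s c -> cle (cjoin r s) c.
Proof. by move=> Hc Hr Hs x y H; apply: H. Qed.

Lemma cjoinC r s : cle (cjoin r s) (cjoin s r).
Proof. exact: cjoin_least (cjoin_cong _ _) (@cjoinr _ _) (@cjoinl _ _). Qed.

Lemma cjoinS r s r' s' : cle r r' -> cle s s' -> cle (cjoin r s) (cjoin r' s').
Proof.
move=> Hr Hs; apply: cjoin_least; first exact: cjoin_cong.
- by move=> x y H; apply: cjoinl; apply: Hr.
- by move=> x y H; apply: cjoinr; apply: Hs.
Qed.

Lemma cmeet_cong r s : is_cong r -> is_cong s -> is_cong (cmeet r s).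
Proof.
move=> [r1 [r2 [r3 r4]]] [s1 [s2 [s3 s4]]]; split; [|split; [|split]].
- by move=> x; split.
- by move=> x y [H1 H2]; split; auto.
- by move=> x y z [H1 H2] [H3 H4]; split; eauto.
- by move=> f a b H; split; [apply: r4|apply: s4] => i; case: (H i).
Qed.

Lemma Delta_cong : is_cong (@Delta A).
Proof.
split; [|split; [|split]] => //.
- by move=> x y z; rewrite /Delta => -> ->.
- by move=> f a b H; congr ops; apply: functional_extensionality.
Qed.

Lemma Nabla_cong : is_cong (@Nabla A).
Proof. by []. Qed.

Definition comaximal r s := cle (@Nabla A) (cjoin r s).

Lemma comaximalC r s : comaximal r s -> comaximal s r.
Proof. by move=> H x y _; apply: cjoinC; apply: H. Qed.

Lemma comaximalS r s r' s' : cle r r' -> cle s s' -> comaximal r s -> comaximal r' s'.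
Proof. by move=> Hr Hs H x y _; apply: cjoinS Hr Hs _ _ (H x y I). Qed.

Lemma complementedP r : complemented r <->
  is_cong r /\ exists s, [/\ is_cong s, cle (cmeet r s) (@Delta A) & comaximal r s].
Proof.
split=> [[Hr [s [Hs [[HM _] [_ HJ]]]]]|[Hr [s [Hs HM HJ]]]]; first by split=> //; exists s.
split=> //; exists s; split=> //; split.
- by split=> // x y; rewrite /Delta => ->; split; apply: cong_refl.
- by split=> // x y _; apply: HJ.
Qed.

Lemma complementedC r s : is_cong r -> is_cong s ->
  cle (cmeet r s) (@Delta A) -> comaximal r s -> complemented s.
Proof.
move=> Hr Hs HM HJ; apply/complementedP; split=> //; exists r; split=> //.
- by move=> x y [H1 H2]; apply: HM.
- exact: comaximalC.
Qed.

Lemma complemented_Delta : complemented (@Delta A).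
Proof.
apply/complementedP; split; first exact: Delta_cong.
by exists (@Nabla A); split=> // [x y [] //|x y _]; apply: cjoinr.
Qed.

Lemma complemented_Nabla : complemented (@Nabla A).
Proof.
apply: (complementedC (@Delta_cong) Nabla_cong) => [x y [] //|x y _].
exact: cjoinr.
Qed.

End CongruenceLattice.

Section Quotient.
Variables (sg : signature) (A : algebra sg) (k : crel A).
Hypothesis Hk : is_cong k.

Lemma cls_repr (X : quot k) : cls k (repr X) = X.
Proof.
apply: eq_sig_hprop => [? ? ?|]; first exact: proof_irrelevance.
by rewrite /= /repr; case: constructive_indefinite_description.
Qed.

Lemma eq_cls x y : cls k x = cls k y <-> k x y.
Proof.
split=> [E|Hxy].
- have /(f_equal (fun P => P y)) : class k x = class k y := f_equal (@proj1_sig _ _) E.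
  by rewrite /class => ->; apply: cong_refl.
- apply: eq_sig_hprop => [? ? ?|]; first exact: proof_irrelevance.
  apply: functional_extensionality => z; apply: propositional_extensionality.
  by split; apply: (cong_trans Hk); [apply: (cong_sym Hk)|].
Qed.

Lemma repr_cls x : k x (repr (cls k x)).
Proof. by apply/eq_cls; rewrite cls_repr. Qed.

Lemma ops_cls (f : sym sg) (xs : 'I_(arity f) -> A) :
  ops (fun i => cls k (xs i) : quot k) = cls k (ops xs).
Proof. by apply/eq_cls; apply: (cong_ops Hk) => i; apply: (cong_sym Hk); apply: repr_cls. Qed.

Lemma eval_quot (e : nat -> quot k) t : eval e t = cls k (eval (fun i => repr (e i)) t).
Proof.
elim: t => [n|f ts IH] /=; first by rewrite cls_repr.
apply/eq_cls; apply: (cong_ops Hk) => i; rewrite IH; apply: (cong_sym Hk); exact: repr_cls.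
Qed.

Lemma in_variety_quot Sigma : in_variety Sigma A -> in_variety Sigma (quot k).
Proof. by move=> HA s t Hst e; rewrite !eval_quot (HA s t Hst). Qed.

Definition quot_rel (r : crel A) : crel (quot k) := fun X Y => r (repr X) (repr Y).

Definition preim (c : crel (quot k)) : crel A := fun x y => c (cls k x) (cls k y).

Section AboveKernel.
Variable r : crel A.
Hypotheses (Hr : is_cong r) (Hkr : cle k r).

Lemma quot_rel_cls x y : quot_rel r (cls k x) (cls k y) <-> r x y.
Proof.
have Hx := Hkr (repr_cls x); have Hy := Hkr (repr_cls y).
split=> H; first by apply: (cong_trans Hr Hx); apply: (cong_trans Hr H); apply: (cong_sym Hr).
by apply: (cong_trans Hr (cong_sym Hr Hx)); apply: (cong_trans Hr H).
Qed.

Lemma quot_rel_cong : is_cong (quot_rel r).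
Proof.
rewrite /quot_rel; split; [|split; [|split]].
- by move=> X; apply: cong_refl.
- by move=> X Y; apply: cong_sym.
- by move=> X Y Z; apply: cong_trans.
- move=> f a b H /=; apply/quot_rel_cls; exact: (cong_ops Hr).
Qed.

End AboveKernel.

Lemma preim_cong c : is_cong c -> is_cong (preim c).
Proof.
move=> Hc; rewrite /preim; split; [|split; [|split]].
- by move=> x; apply: (cong_refl Hc).
- by move=> x y; apply: (cong_sym Hc).
- by move=> x y z; apply: (cong_trans Hc).
- by move=> f a b H; rewrite -!ops_cls; apply: (cong_ops Hc).
Qed.

Lemma preim_above c : is_cong c -> cle k (preim c).
Proof. by move=> Hc x y /eq_cls Hxy; rewrite /preim Hxy; apply: (cong_refl Hc). Qed.

Lemma preim_repr c X Y : c X Y <-> preim c (repr X) (repr Y).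
Proof. by rewrite /preim !cls_repr. Qed.

Lemma quot_rel_meet r s : cle (cmeet r s) k -> cle (cmeet (quot_rel r) (quot_rel s)) (@Delta _).
Proof. by move=> Hrs X Y H; rewrite /Delta -(cls_repr X) -(cls_repr Y); apply/eq_cls/Hrs. Qed.

Lemma quot_rel_comaximal r s : is_cong r -> is_cong s -> cle k r -> cle k s ->
  comaximal r s -> comaximal (quot_rel r) (quot_rel s).
Proof.
move=> Hr Hs Hkr Hks Hrs X Y _ c Hc HrC HsC; apply/preim_repr.
apply: (Hrs _ _ I); first exact: preim_cong.
- by move=> x y /(quot_rel_cls Hr Hkr) /HrC.
- by move=> x y /(quot_rel_cls Hs Hks) /HsC.
Qed.

Lemma complemented_quot_rel r s : is_cong r -> is_cong s -> cle k r -> cle k s ->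
  comaximal r s -> cle (cmeet r s) k -> complemented (quot_rel r).
Proof.
move=> Hr Hs Hkr Hks Hrs HM; apply/complementedP; split; first exact: quot_rel_cong.
exists (quot_rel s); split; [exact: quot_rel_cong|exact: quot_rel_meet|].
exact: quot_rel_comaximal.
Qed.

Lemma preim_meet c d : cle (cmeet c d) (@Delta _) -> cle (cmeet (preim c) (preim d)) k.
Proof. by move=> Hcd x y H; apply/eq_cls/Hcd. Qed.

Lemma preim_comaximal c d : is_cong c -> is_cong d -> comaximal c d ->
  comaximal (preim c) (preim d).
Proof.
move=> Hc Hd Hcd x y _ r Hr HcR HdR.
have Hkr : cle k r by move=> u v /(preim_above Hc) /HcR.
apply/(quot_rel_cls Hr Hkr); apply: (Hcd _ _ I); first exact: quot_rel_cong.
- by move=> X Y /preim_repr /HcR.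
- by move=> X Y /preim_repr /HdR.
Qed.

End Quotient.

Arguments quot_rel {sg A} k r.

Section Generation.
Variables (sg : signature) (A : algebra sg).
Implicit Types r s : crel A.

Definition translation_closed r := forall f (z : 'I_(arity f) -> A) j u v,
  r u v -> r (ops [eta z with j |-> u]) (ops [eta z with j |-> v]).

Lemma cong_translation_closed r : is_cong r -> translation_closed r.
Proof.
move=> Hr f z j u v Huv; apply: (cong_ops Hr) => i /=.
by case: (i == j) => //; apply: cong_refl.
Qed.

Lemma rt_translation_closed r : translation_closed r -> translation_closed (clos_refl_trans A r).
Proof.
move=> Hr f z j u v; elim=> [w w' Hww'|w|w1 w2 w3 _ IH1 _ IH2].
- exact/rt_step/Hr.
- exact: rt_refl.
- exact: rt_trans IH1 IH2.
Qed.

Lemma rt_ops r : translation_closed r -> forall f (x y : 'I_(arity f) -> A),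
  (forall i, clos_refl_trans A r (x i) (y i)) -> clos_refl_trans A r (ops x) (ops y).
Proof.
move=> Hr f x y Hxy; pose xy m (i : 'I_(arity f)) := if i < m then y i else x i.
have Hxy_step m (Hm : m < arity f) : clos_refl_trans A r (ops (xy m)) (ops (xy m.+1)).
  pose j := Ordinal Hm.
  have -> : xy m = [eta xy m with j |-> x j].
    by apply: functional_extensionality => i /=; case: eqP => [->|]; rewrite /xy ?ltnn.
  have -> : xy m.+1 = [eta xy m with j |-> y j].
    apply: functional_extensionality => i /=; rewrite /xy ltnS leq_eqVlt.
    case: (eqVneq i j) => [->|/negbTE Hij]; rewrite /= ?eqxx //.
    by have -> : (i == m :> nat) = false := Hij.
  exact: rt_translation_closed.
have Hxy_le m : m <= arity f -> clos_refl_trans A r (ops x) (ops (xy m)).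
  elim: m => [|m IH] Hm.
    have -> : xy 0 = x by apply: functional_extensionality.
    exact: rt_refl.
  exact: rt_trans (IH (ltnW Hm)) (Hxy_step m Hm).
have -> : y = xy (arity f) by apply: functional_extensionality => i; rewrite /xy ltn_ord.
exact: Hxy_le.
Qed.

Lemma rt_sym r : (forall x y, r x y -> r y x) ->
  forall x y, clos_refl_trans A r x y -> clos_refl_trans A r y x.
Proof.
move=> Hr x y; elim=> [u v Huv|u|u v w _ IH1 _ IH2].
- exact/rt_step/Hr.
- exact: rt_refl.
- exact: rt_trans IH2 IH1.
Qed.

Lemma rt_cong r : (forall x y, r x y -> r y x) -> translation_closed r ->
  is_cong (clos_refl_trans A r).
Proof.
move=> Hsym Hr; split; [|split; [|split]].
- exact: rt_refl.
- exact: rt_sym.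
- by move=> x y z; apply: rt_trans.
- exact: rt_ops.
Qed.

Lemma cjoin_rt r s : is_cong r -> is_cong s ->
  cle (cjoin r s) (clos_refl_trans A (fun u v => r u v \/ s u v)).
Proof.
move=> Hr Hs; apply: cjoin_least.
- apply: rt_cong; first by move=> u v [/(cong_sym Hr)|/(cong_sym Hs)]; auto.
  by move=> f z j u v [/(cong_translation_closed Hr)|/(cong_translation_closed Hs)]; auto.
- by move=> u v H; apply: rt_step; left.
- by move=> u v H; apply: rt_step; right.
Qed.

Lemma eval_cong r : is_cong r -> forall (e e' : nat -> A) t,
  (forall i, r (e i) (e' i)) -> r (eval e t) (eval e' t).
Proof.
move=> Hr e e' t H; elim: t => [n|f ts IH] /=; first exact: H.
exact: (cong_ops Hr).
Qed.

End Generation.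

Fixpoint var_bound sg (t : term sg) : nat :=
  match t with Var n => n.+1 | App f ts => \max_(i < arity f) var_bound (ts i) end.

Fixpoint rename sg (sigma : nat -> nat) (t : term sg) : term sg :=
  match t with
  | Var n => Var sg (sigma n)
  | App f ts => App (fun i => rename sigma (ts i))
  end.

Section Terms.
Variables (sg : signature) (A : algebra sg).

Lemma eq_eval_var_bound (e e' : nat -> A) (t : term sg) :
  (forall i, i < var_bound t -> e i = e' i) -> eval e t = eval e' t.
Proof.
elim: t => [n|f ts IH] /= H; first exact: H.
congr ops; apply: functional_extensionality => i; apply: IH => m Hm; apply: H.
apply: (leq_trans Hm); exact: (@leq_bigmax _ (fun i0 => var_bound (ts i0)) i).
Qed.

Lemma eval_rename sigma (e : nat -> A) (t : term sg) :
  eval e (rename sigma t) = eval (e \o sigma) t.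
Proof.
elim: t => [n|f ts IH] //=.
by congr ops; apply: functional_extensionality => i; apply: IH.
Qed.

End Terms.

Section PairAlgebra.
Variables (sg : signature) (A : algebra sg) (chi : crel A).
Hypothesis Hchi : is_cong chi.

Definition pair_alg : algebra sg :=
  @Algebra sg {p : A * A | chi p.1 p.2}
    (fun f xs => exist (fun p : A * A => chi p.1 p.2)
       (ops (fun i => (sval (xs i)).1), ops (fun i => (sval (xs i)).2))
       (cong_ops Hchi (fun i => proj2_sig (xs i)))).

Lemma eval_pair_alg (e : nat -> pair_alg) t :
  sval (eval e t) = (eval (fun i => (sval (e i)).1) t, eval (fun i => (sval (e i)).2) t).
Proof.
elim: t => [n|f ts IH] /=; first by case: (sval (e n)).
by congr pair; congr ops; apply: functional_extensionality => i; rewrite IH.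
Qed.

Lemma in_variety_pair_alg Sigma : in_variety Sigma A -> in_variety Sigma pair_alg.
Proof.
move=> HA s t Hst e; apply: eq_sig_hprop => [? ? ?|]; first exact: proof_irrelevance.
by rewrite !eval_pair_alg !(HA s t Hst).
Qed.

(* [p] and [q] are the rows of a matrix [t(a,c) t(a,d); t(b,c) t(b,d)] with [c] chi-related
   to [d], as in the term condition C(Nabla, chi; Delta). *)
Definition matrix_rel : crel pair_alg := fun p q =>
  exists t P a b c d, [/\ forall i, chi (c i) (d i),
    sval p = (eval (mix P a c) t, eval (mix P a d) t) &
    sval q = (eval (mix P b c) t, eval (mix P b d) t)].

Definition diagonal (p : pair_alg) := (sval p).1 = (sval p).2.

Lemma matrix_rel_sym p q : matrix_rel p q -> matrix_rel q p.
Proof. by case=> t [P [a [b [c [d [Hcd Hp Hq]]]]]]; exists t, P, b, a, c, d. Qed.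

Lemma matrix_rel_diagonal p q : diagonal p -> diagonal q -> matrix_rel p q.
Proof.
case: p => [[u u'] Hu]; case: q => [[w w'] Hw]; rewrite /diagonal /= => Eu Ew; subst u' w'.
exists (Var sg 0), predT, (fun _ => u), (fun _ => w), (fun _ => u), (fun _ => u).
by split=> // i; apply: cong_refl.
Qed.

Lemma matrix_rel_translation_closed : translation_closed matrix_rel.
Proof.
move=> f z j p q [t [P [a [b [c [d [Hcd Hp Hq]]]]]]].
(* Put the other arguments of [f] in fresh variables [0 .. n-1] of the chi-group and shift
   the variables of [t] by [n]. *)
set n := arity f.
pose ext (u : 'I_n -> A) (e : nat -> A) i := if i < n then u (insubd j i) else e (i - n).
pose P' i := (n <= i) && P (i - n).
pose t' := App (fun i : 'I_n => if i == j then rename (addn n) t else Var sg i).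
have Heval a0 u e : eval (mix P' (fun i => a0 (i - n)) (ext u e)) t' =
    ops (fun i => if i == j then eval (mix P a0 e) t else u i).
  congr ops; apply: functional_extensionality => i; case: (i == j).
  - apply: etrans (eval_rename _ _ _) _; congr eval; apply: functional_extensionality => m.
    by rewrite /= /mix /P' /ext leq_addr ltnNge leq_addr addKn.
  - by rewrite /= /mix /P' /ext leqNgt ltn_ord /= valKd.
exists t', P', (fun i => a (i - n)), (fun i => b (i - n)),
  (ext (fun i => (sval (z i)).1) c), (ext (fun i => (sval (z i)).2) d).
split; first by move=> i; rewrite /ext; case: (i < n) => //; apply: (proj2_sig (z _)).
- by rewrite !Heval /=; congr pair; congr ops; apply: functional_extensionality => i;
    case: (i == j); rewrite ?Hp.
- by rewrite !Heval /=; congr pair; congr ops; apply: functional_extensionality => i;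
    case: (i == j); rewrite ?Hq.
Qed.

Lemma matrix_cong : is_cong (clos_refl_trans pair_alg matrix_rel).
Proof. exact: rt_cong matrix_rel_sym matrix_rel_translation_closed. Qed.

Lemma matrix_cong_diagonal p q : TC (@Nabla A) chi (@Delta A) ->
  clos_refl_trans pair_alg matrix_rel p q -> diagonal p -> diagonal q.
Proof.
move=> HTC; elim=> [u v [t [P [a [b [c [d [Hcd Hu Hv]]]]]]]|//|u v w _ IH1 _ IH2].
- by rewrite /diagonal Hu Hv /=; apply: HTC.
- by move/IH1/IH2.
Qed.

(* The diagonal is a single class of the matrix congruence, hence a one-element subalgebra
   of the quotient; semidegeneracy then collapses the quotient. *)
Lemma TC_Nabla_Delta Sigma : in_variety Sigma A -> semidegenerate Sigma ->
  TC (@Nabla A) chi (@Delta A) -> cle chi (@Delta A).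
Proof.
move=> HA Hsd HTC x y Hxy.
pose Q := quot (clos_refl_trans pair_alg matrix_rel).
pose diag_x : pair_alg := exist (fun p : A * A => chi p.1 p.2) (x, x) (cong_refl Hchi x).
pose xy : pair_alg := exist (fun p : A * A => chi p.1 p.2) (x, y) Hxy.
have HQ : in_variety Sigma Q := in_variety_quot matrix_cong (in_variety_pair_alg HA).
have Hsub f (args : 'I_(arity f) -> Q) : (forall i, args i = cls _ diag_x) ->
    ops args = cls _ diag_x.
  move=> Hargs; apply/(eq_cls matrix_cong).
  apply: (cong_trans matrix_cong (y := ops (fun _ => diag_x))).
  - apply: (cong_ops matrix_cong) => i; rewrite Hargs.
    by apply: (cong_sym matrix_cong); apply: repr_cls matrix_cong _.
  - exact/rt_step/matrix_rel_diagonal.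
have /(eq_cls matrix_cong) := Hsd _ HQ _ Hsub (cls _ diag_x) (cls _ xy).
by move/(matrix_cong_diagonal HTC)/(_ erefl).
Qed.

End PairAlgebra.

Section TermCondition.
Variables (sg : signature) (A : algebra sg).
Implicit Types r s : crel A.

Lemma TC_meet_Delta r s : is_cong r -> is_cong s ->
  cle (cmeet r s) (@Delta A) -> TC r s (@Delta A).
Proof.
move=> Hr Hs Hrs t P a b c d Hab Hcd E; apply: Hrs; split.
- apply: (cong_trans Hr (y := eval (mix P a c) t)).
    apply: (eval_cong Hr) => i; rewrite /mix; case: (P i); last exact: cong_refl.
    exact: (cong_sym Hr).
  rewrite E; apply: (eval_cong Hr) => i; rewrite /mix; case: (P i) => //; exact: cong_refl.
- apply: (eval_cong Hs) => i; rewrite /mix; case: (P i) => //; exact: cong_refl.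
Qed.

Lemma TC_cjoin r s chi delta : is_cong r -> is_cong s ->
  TC r chi delta -> TC s chi delta -> TC (cjoin r s) chi delta.
Proof.
move=> Hr Hs Tr Ts t P a b c d Hab Hcd.
pose holds (e : nat -> A) := delta (eval (mix P e c) t) (eval (mix P e d) t).
have Hcoord i u w : clos_refl_trans A (fun u v => r u v \/ s u v) u w ->
    forall e e', e i = u -> e' i = w -> (forall j, j != i -> e j = e' j) ->
    holds e -> holds e'.
  elim=> {u w} [u w Huw|u|u v w _ IH1 _ IH2] e e' Hu Hw Hee'.
  - have Hstep (q : crel A) : is_cong q -> q u w -> forall j, q (e j) (e' j).
      move=> Hq Hq_uw j; have [->|/Hee' ->] := eqVneq j i; first by rewrite Hu Hw.
      exact: cong_refl.
    by case: Huw => [/(Hstep r Hr)/Tr|/(Hstep s Hs)/Ts]; apply.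
  - suff -> : e = e' by [].
    apply: functional_extensionality => j.
    by have [->|/Hee' //] := eqVneq j i; rewrite Hu Hw.
  - pose m j := if j == i then v else e j.
    move=> He; apply: (IH2 m) => //.
    + by rewrite /m eqxx.
    + by move=> j Hj; rewrite /m (negbTE Hj) Hee'.
    + apply: (IH1 e m) => //; first by rewrite /m eqxx.
      by move=> j Hj; rewrite /m (negbTE Hj).
pose ab k j := if j < k then b j else a j.
have Hab_k k : holds a -> holds (ab k).
  elim: k => [|k IH] Ha.
    by rewrite (_ : ab 0 = a).
  apply: (Hcoord k (a k) (b k) _ (ab k) (ab k.+1)) (IH Ha).
  - exact: cjoin_rt Hr Hs _ _ (Hab k).
  - by rewrite /ab ltnn.
  - by rewrite /ab ltnSn.
  - by move=> j Hj; rewrite /ab ltnS [j <= k]leq_eqVlt (negbTE Hj).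
have Hab_t e : eval (mix P (ab (var_bound t)) e) t = eval (mix P b e) t.
  by apply: eq_eval_var_bound => j Hj; rewrite /mix /ab Hj.
by move=> /(Hab_k (var_bound t)); rewrite /holds !Hab_t.
Qed.

End TermCondition.

Lemma comaximal_disjoint_Delta sg (Sigma : term sg -> term sg -> Prop) (A : algebra sg) :
  semidegenerate Sigma -> in_variety Sigma A -> forall r s chi : crel A,
  is_cong r -> is_cong s -> is_cong chi -> comaximal r s ->
  cle (cmeet r chi) (@Delta A) -> cle (cmeet s chi) (@Delta A) -> cle chi (@Delta A).
Proof.
move=> Hsd HA r s chi Hr Hs Hchi Hrs Hr_chi Hs_chi.
apply: (TC_Nabla_Delta Hchi HA Hsd) => t P a b c d _.
apply: (TC_cjoin Hr Hs (TC_meet_Delta Hr Hchi Hr_chi) (TC_meet_Delta Hs Hchi Hs_chi)).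
by move=> i; apply: Hrs.
Qed.

Section ModularSemidegenerate.
Variables (sg : signature) (Sigma : term sg -> term sg -> Prop).
Hypotheses (HCM : congruence_modular Sigma) (Hsd : semidegenerate Sigma).
Variable A : algebra sg.
Hypothesis HA : in_variety Sigma A.
Implicit Types r s chi kappa : crel A.

Lemma modular r s chi : is_cong r -> is_cong s -> is_cong chi -> cle r chi ->
  cle (cmeet (cjoin r s) chi) (cjoin r (cmeet s chi)).
Proof. by move=> Hr Hs Hchi Hr_chi; case: (HCM HA Hr Hs Hchi Hr_chi). Qed.

Lemma comaximal_disjoint_le r s chi delta :
  is_cong r -> is_cong s -> is_cong chi -> is_cong delta -> comaximal r s ->
  cle delta chi -> cle (cmeet r chi) delta -> cle (cmeet s chi) delta -> cle chi delta.
Proof.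
move=> Hr Hs Hchi Hd Hrs Hd_chi Hr_chi Hs_chi.
have Hquot q : is_cong q -> cle (cmeet q chi) delta ->
    cle (cmeet (quot_rel delta (cjoin delta q)) (quot_rel delta chi)) (@Delta _).
  move=> Hq Hq_chi; apply: (quot_rel_meet Hd) => x y /(modular Hd Hq Hchi Hd_chi).
  exact: (cjoin_least Hd (fun _ _ H => H) Hq_chi).
have Hcomax : comaximal (quot_rel delta (cjoin delta r)) (quot_rel delta (cjoin delta s)).
  apply: (quot_rel_comaximal Hd); try exact: cjoin_cong; try exact: cjoinl.
  exact: comaximalS (@cjoinr _ _ _ _) (@cjoinr _ _ _ _) Hrs.
have := comaximal_disjoint_Delta Hsd (in_variety_quot Hd HA)
  (quot_rel_cong Hd (cjoin_cong delta r) (@cjoinl _ _ _ _))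
  (quot_rel_cong Hd (cjoin_cong delta s) (@cjoinl _ _ _ _)) (quot_rel_cong Hd Hchi Hd_chi).
move/(_ Hcomax (Hquot r Hr Hr_chi) (Hquot s Hs Hs_chi)) => Hchi_Delta x y Hxy.
by apply/(eq_cls Hd)/Hchi_Delta/(quot_rel_cls Hd Hchi Hd_chi).
Qed.

Lemma comaximal_meet_distr r s chi : is_cong r -> is_cong s -> is_cong chi ->
  comaximal r s -> cle chi (cjoin (cmeet r chi) (cmeet s chi)).
Proof.
move=> Hr Hs Hchi Hrs; apply: (comaximal_disjoint_le Hr Hs Hchi _ Hrs).
- exact: cjoin_cong.
- by apply: cjoin_least Hchi _ _ => x y [].
- exact: cjoinl.
- exact: cjoinr.
Qed.

Lemma comaximal_meet_cjoin r s kappa : is_cong r -> is_cong s -> is_cong kappa ->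
  comaximal r s -> cle (cmeet r s) kappa -> cle (cmeet r (cjoin s kappa)) kappa.
Proof.
move=> Hr Hs Hk Hrs Hrs_k.
have Hsk : cle (cjoin s kappa) (cjoin (cmeet r kappa) s).
  apply: cjoin_least (cjoin_cong _ _) (@cjoinr _ _ _ _) _.
  apply: cle_trans (comaximal_meet_distr Hr Hs Hk Hrs) _.
  by apply: cjoinS => // u v [].
have Hmod := modular (cmeet_cong Hr Hk) Hs Hr (fun _ _ H => proj1 H).
apply: cle_trans (cle_trans _ Hmod) _; first by move=> x y [Hxy_r /Hsk Hxy_sk]; split.
apply: (cjoin_least Hk) => [u v []//|u v [Hs_uv Hr_uv]].
exact: Hrs_k.
Qed.

Lemma comaximal_cjoin_meet r s kappa : is_cong r -> is_cong s -> is_cong kappa ->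
  comaximal r s -> cle (cmeet r s) kappa -> cle (cmeet (cjoin r kappa) (cjoin s kappa)) kappa.
Proof.
move=> Hr Hs Hk Hrs Hrs_k.
have Hmeet := cmeet_cong (cjoin_cong r kappa) (cjoin_cong s kappa).
apply: cle_trans (comaximal_meet_distr Hr Hs Hmeet Hrs) _.
apply: (cjoin_least Hk) => [u v [Hr_uv [_ Hsk_uv]]|u v [Hs_uv [Hrk_uv _]]].
- exact: (comaximal_meet_cjoin Hr Hs Hk Hrs Hrs_k (conj Hr_uv Hsk_uv)).
- apply: (comaximal_meet_cjoin Hs Hr Hk (comaximalC Hrs) _ (conj Hs_uv Hrk_uv)).
  by move=> u' v' [? ?]; apply: Hrs_k.
Qed.

Lemma comaximal_complement_le r s e kappa : is_cong r -> is_cong s -> is_cong e ->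
  cle kappa e -> comaximal e s -> cle (cmeet r s) kappa -> cle r e.
Proof.
move=> Hr Hs He Hk_e Hes Hrs_k; apply: cle_trans (comaximal_meet_distr He Hs Hr Hes) _.
apply: (cjoin_least He) => [u v []//|u v [Hs_uv Hr_uv]].
exact/Hk_e/Hrs_k.
Qed.

Lemma cjoin_complement_eq al al' kappa r s :
  is_cong al -> is_cong al' -> is_cong kappa -> is_cong r -> is_cong s ->
  cle (cmeet al al') (@Delta A) -> comaximal al al' -> ceq s (cjoin al kappa) ->
  cle kappa r -> comaximal r s -> cle (cmeet r s) kappa -> ceq r (cjoin al' kappa).
Proof.
move=> Hal Hal' Hk Hr Hs Hmeet Hcomax [Hs_le Hle_s] Hk_r Hrs Hrs_k.
have He := cjoin_cong al' kappa.
have He_s : comaximal (cjoin al' kappa) s.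
  apply: comaximalS (@cjoinl _ _ _ _) _ (comaximalC Hcomax).
  exact: cle_trans (@cjoinl _ _ al kappa) Hle_s.
have Hes_k : cle (cmeet (cjoin al' kappa) s) kappa.
  apply: cle_trans (comaximal_cjoin_meet Hal' Hal Hk (comaximalC Hcomax) _).
  - by move=> x y [Hx /Hs_le Hy]; split.
  - by move=> x y [H1 H2]; rewrite (Hmeet x y (conj H2 H1)); apply: cong_refl.
split.
- exact: comaximal_complement_le Hr Hs He (@cjoinr _ _ _ _) He_s Hrs_k.
- exact: comaximal_complement_le He Hs Hr Hk_r Hrs Hes_k.
Qed.

Lemma boolean_center_le2_dichotomy chi e e' :
  is_cong chi -> boolean_center_le2 (quot chi) -> is_cong e -> is_cong e' ->
  comaximal e e' -> cle (cmeet e e') chi ->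
  [\/ cle e chi, comaximal e chi | cle (@Nabla A) chi].
Proof.
move=> Hchi Hb2 He He' Hee' Hee'_chi.
have Hcompl : complemented (quot_rel chi (cjoin e chi)).
  apply: (complemented_quot_rel Hchi (cjoin_cong e chi) (cjoin_cong e' chi)).
  - exact: cjoinr.
  - exact: cjoinr.
  - exact: comaximalS (@cjoinl _ _ _ _) (@cjoinl _ _ _ _) Hee'.
  - exact: comaximal_cjoin_meet.
have Hcls := quot_rel_cls Hchi (cjoin_cong e chi) (@cjoinr _ _ _ _).
case: (Hb2 _ _ _ (complemented_Delta _) (complemented_Nabla _) Hcompl)
  => [[_ H]|[[_ H]|[H _]]].
- by constructor 3 => x y _; apply/(eq_cls Hchi); apply: H.
- by constructor 1 => x y Hxy; apply/(eq_cls Hchi); exact: (H _ _ ((Hcls x y).2 (cjoinl Hxy))).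
- by constructor 2 => x y _; apply/Hcls; exact: (H _ _ I).
Qed.

End ModularSemidegenerate.

Section Proposition.
Variables (sg : signature) (Sigma : term sg -> term sg -> Prop).
Hypotheses (HCM : congruence_modular Sigma) (Hsd : semidegenerate Sigma).
Variable A : algebra sg.
Hypothesis HA : in_variety Sigma A.
Variables theta chi : crel A.
Hypotheses (Htheta : is_cong theta) (Hchi : is_cong chi).
Hypothesis Hjoin : ~ ceq (cjoin theta chi) (@Nabla A).
Hypothesis Hcblp : CBLP theta.
Hypothesis Hb2 : boolean_center_le2 (quot chi).

Let mu := cmeet theta chi.

Lemma not_comaximal_chi e : cle e (cjoin theta chi) -> ~ comaximal e chi.
Proof.
move=> He He_chi; apply: Hjoin; split=> // x y _.
exact: (cjoin_least (cjoin_cong _ _) He (@cjoinr _ _ _ _) (He_chi x y I)).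
Qed.

Lemma not_Nabla_le_chi : ~ cle (@Nabla A) chi.
Proof. by move=> H; apply: Hjoin; split=> // x y _; apply: cjoinr; apply: H. Qed.

Lemma exists_complemented_cjoin_le_chi r s : is_cong r -> is_cong s -> cle mu r ->
  comaximal r s -> cle (cmeet r s) mu -> cle r chi ->
  exists2 al, complemented al & ceq r (cjoin al mu).
Proof.
move=> Hr Hs Hmu_r Hrs Hrs_mu Hr_chi.
have Hcompl : complemented (quot_rel theta (cjoin r theta)).
  apply: (complemented_quot_rel Htheta (cjoin_cong r theta) (cjoin_cong s theta)).
  - exact: cjoinr.
  - exact: cjoinr.
  - exact: comaximalS (@cjoinl _ _ _ _) (@cjoinl _ _ _ _) Hrs.
  - by apply: (comaximal_cjoin_meet HCM Hsd HA) => // x y /Hrs_mu [].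
case: (Hcblp Hcompl) => al [Hal Hal_eq].
have /complementedP [Hal_cong [al' [Hal' Hmeet Hcomax]]] := Hal.
have Hal_r x y : cjoin al theta x y <-> cjoin r theta x y.
  rewrite -(quot_rel_cls Htheta (cjoin_cong r theta) (@cjoinr _ _ _ _)).
  rewrite -(quot_rel_cls Htheta (cjoin_cong al theta) (@cjoinr _ _ _ _) x y).
  by split=> /Hal_eq.
have Hal_chi : cle al chi.
  case: (boolean_center_le2_dichotomy HCM Hsd HA Hchi Hb2 Hal_cong Hal' Hcomax) => //.
  - by move=> x y /Hmeet ->; apply: cong_refl.
  - move/not_comaximal_chi; case=> x y Hxy.
    have /Hal_r : cjoin al theta x y by apply: cjoinl.
    by move/(cjoinS Hr_chi (fun _ _ H => H))/cjoinC.
  - by move/not_Nabla_le_chi.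
exists al => //; split.
- move=> x y Hxy; apply: (modular HCM HA Hal_cong Htheta Hchi Hal_chi).
  by split; [apply/Hal_r; apply: cjoinl|apply: Hr_chi].
- apply: (cjoin_least Hr _ Hmu_r) => x y Hxy.
  have Hr_theta : cjoin r theta x y by apply/Hal_r; apply: cjoinl.
  have := modular HCM HA Hr Htheta Hchi Hr_chi (conj Hr_theta (Hal_chi _ _ Hxy)).
  exact: (cjoin_least Hr (fun _ _ H => H) Hmu_r).
Qed.

Lemma exists_complemented_cjoin r s : is_cong r -> is_cong s -> cle mu r -> cle mu s ->
  comaximal r s -> cle (cmeet r s) mu -> exists2 al, complemented al & ceq r (cjoin al mu).
Proof.
move=> Hr Hs Hmu_r Hmu_s Hrs Hrs_mu.
have Hsr_mu : cle (cmeet s r) mu by move=> x y [? ?]; apply: Hrs_mu.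
have Hchi_of q q' : cle (cmeet q q') mu -> cle (cmeet q q') chi by move=> H x y /H [].
have dichotomy := boolean_center_le2_dichotomy HCM Hsd HA Hchi Hb2.
case: (dichotomy _ _ Hr Hs Hrs (Hchi_of _ _ Hrs_mu)) => [Hr_chi|Hr_chi|/not_Nabla_le_chi//].
  exact: exists_complemented_cjoin_le_chi Hr Hs Hmu_r Hrs Hrs_mu Hr_chi.
case: (dichotomy _ _ Hs Hr (comaximalC Hrs) (Hchi_of _ _ Hsr_mu))
  => [Hs_chi|Hs_chi|/not_Nabla_le_chi//].
- have [al Hal Hs_eq] :=
    exists_complemented_cjoin_le_chi Hs Hr Hmu_s (comaximalC Hrs) Hsr_mu Hs_chi.
  have /complementedP [Hal_cong [al' [Hal' Hmeet Hcomax]]] := Hal.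
  exists al'; first exact: complementedC Hal_cong Hal' Hmeet Hcomax.
  exact: (cjoin_complement_eq HCM Hsd HA Hal_cong Hal' (cmeet_cong Htheta Hchi) Hr Hs
    Hmeet Hcomax Hs_eq Hmu_r Hrs Hrs_mu).
- case: not_Nabla_le_chi.
  apply: cle_trans (comaximal_cjoin_meet HCM Hsd HA Hr Hs Hchi Hrs (Hchi_of _ _ Hrs_mu)).
  by move=> x y _; split; [apply: Hr_chi|apply: Hs_chi].
Qed.

End Proposition.

Theorem proposition6p7 (sg : signature) (Sigma : term sg -> term sg -> Prop)
  (HCM : congruence_modular Sigma) (Hsd : semidegenerate Sigma)
  (Hst : standing_assumption Sigma)
  (A : algebra sg) (HA : in_variety Sigma A)
  (theta chi : crel A) (Htheta : is_cong theta) (Hchi : is_cong chi)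
  (Hjoin : ~ ceq (cjoin theta chi) (@Nabla A))
  (Hcblp : CBLP theta) (Hb2 : boolean_center_le2 (quot chi)) :
  CBLP (cmeet theta chi).
Proof.
move=> beta /complementedP [Hbeta [gamma [Hgamma Hmeet Hcomax]]].
have Hmu := cmeet_cong Htheta Hchi.
have [al Hal [Hle Hge]] := exists_complemented_cjoin HCM Hsd HA Htheta Hchi Hjoin Hcblp Hb2
  (preim_cong Hmu Hbeta) (preim_cong Hmu Hgamma) (preim_above Hmu Hbeta)
  (preim_above Hmu Hgamma) (preim_comaximal Hmu Hbeta Hgamma Hcomax) (preim_meet Hmu Hmeet).
by exists al; split=> // X Y; rewrite (preim_repr beta); split; [apply: Hle|apply: Hge].
Qed.
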